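(* Consider the $2\times2$ TAHO scheme defined in the context, with $a=F'(0)>0$ and $\lambda\ge\|F'\|_\infty$, and let $m_1=\min_uM_1'(u)>0$, $m_2=\min_uM_2'(u)>0$ (minima over the range of $u$ under consideration). Suppose $$\Delta t\le\min\Big(\frac{1-\lambda\rho}{1+\gamma_1},\frac{1-\lambda\rho}{1-\gamma_2}\Big),$$ and, if $\lambda>2a$, $$\Delta x\le\frac{a^2}{\lambda+a},\qquad \rho\le\min\Big(\frac1\lambda,\ \frac{2\lambda^2m_1}{2a^2\lambda m_1+a_+a_-^2},\ \frac{2\lambda^2m_2}{2a^2\lambda m_2+a_+^2a_-}\Big),$$ while if $a<\lambda<2a$, the same conditions together with $\rho\ge\frac{|\lambda-2a|}{a^2-\Delta x\,a_-}$. Then the scheme satisfies the monotonicity conditions: for $i=1,2$ and all $u$ in the range under consideration, $(\mathcal{B}^i_l)'(u)\ge0$ for $l=-1,0,1$; $1-\rho q+\Delta t\big((\mathcal{B}^i_0)'(u)-\beta^i_0\big)\ge0$; $\frac{\rho(\lambda_i+q)}{2}+\Delta t\big((\mathcal{B}^i_{-1})'(u)-\beta^i_{-1}\big)\ge0$; $\frac{\rho(q-\lambda_i)}{2}+\Delta t\big((\mathcal{B}^i_1)'(u)-\beta^i_1\big)\ge0$.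
   Context: Jin–Xin system: $\partial_tf^i+\lambda_i\partial_xf^i=M_i(u)-f^i$, $i=1,2$, scalar unknowns ($k=1$), $\lambda_1=-\lambda$, $\lambda_2=\lambda$, $\lambda>0$, $u=f^1+f^2$, with $F(u)=\lambda(M_2(u)-M_1(u))$ smooth, $F(0)=0$, $M_1+M_2=\mathrm{id}$; equivalently $u_t+v_x=0$, $v_t+\lambda^2u_x=F(u)-v$ with $v=\lambda(f^2-f^1)$. Set $a=F'(0)$, $a_\pm=\lambda\pm a$, $\rho=\Delta t/\Delta x$, $q=\lambda$. The $2\times2$ TAHO scheme is $$\frac{f^i_{j,n+1}-f^i_{j,n}}{\Delta t}+\frac{\lambda_i}{2\Delta x}(f^i_{j+1,n}-f^i_{j-1,n})-\frac{q}{2\Delta x}(f^i_{j+1,n}-2f^i_{j,n}+f^i_{j-1,n})=\sum_{l=-1,0,1}\big(\mathcal{B}^i_l(u_{j+l,n})-\beta^i_lf^i_{j+l,n}\big),$$ with scalar $\beta^i_l$ and functions $\mathcal{B}^i_l$ determined by: $\beta^i_{-1}+\beta^i_0+\beta^i_1=1-\frac{\rho}{2}\Delta x$; $\mathcal{B}^i_{-1}+\mathcal{B}^i_0+\mathcal{B}^i_1=M_i(u)(1-\frac{\rho}{2}\Delta x)$; $\beta^i_1-\beta^i_{-1}=\gamma_i$ and $\mathcal{B}^i_1-\mathcal{B}^i_{-1}=\Gamma_i$, where $\gamma_1=\frac{q}{2a_+}+\frac{a\rho}{2a_+}(2\lambda+a)$, $\gamma_2=-\frac{q}{2a_-}+\frac{a\rho}{2a_-}(2\lambda-a)$,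 $\Gamma_1(u)=\frac{q-a^2\rho}{2a_+}M_1(u)-\frac{a_-^2}{4\lambda}\rho u$, $\Gamma_2(u)=-\frac{q-a^2\rho}{2a_-}M_2(u)+\frac{a_+^2}{4\lambda}\rho u$; and finally $\beta^1_0=1-\gamma_1-\frac{\rho}{2}\Delta x$, $\beta^2_0=1+\gamma_2-\frac{\rho}{2}\Delta x$, and $\mathcal{B}^i_0$ is chosen with $(\mathcal{B}^i_0)'(u)=M_i'(u)-|\Gamma_i'(u)|-\frac{\rho}{2}\Delta x\,M_i'(u)$ for $i=1,2$. *)

From Stdlib Require Import Reals ZArith.
Open Scope R_scope.

(* Flux of the Jin--Xin relaxation: F(u) = lambda (M_2(u) - M_1(u)). *)
Definition Fflux (lam : R) (M1 M2 : R -> R) : R -> R :=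
  fun u => lam * (M2 u - M1 u).

(* a_+ = lambda + a, a_- = lambda - a ; q = lambda *)
Definition a_plus (lam a : R) : R := lam + a.
Definition a_minus (lam a : R) : R := lam - a.

(* The scalar M_i for i = 1, 2 (any other index is mapped to M_2). *)
Definition Mi (M1 M2 : R -> R) (i : nat) : R -> R :=
  if Nat.eqb i 1 then M1 else M2.

Definition lambda_i (lam : R) (i : nat) : R :=
  if Nat.eqb i 1 then - lam else lam.

(* gamma_i, with q = lambda and rho = dt/dx *)
Definition gamma_i (lam a rho : R) (i : nat) : R :=
  if Nat.eqb i 1 then
    lam / (2 * a_plus lam a) + a * rho / (2 * a_plus lam a) * (2 * lam + a)
  else
    - (lam / (2 * a_minus lam a)) + a * rho / (2 * a_minus lam a) * (2 * lam - a).

Definition Gamma_i (M1 M2 : R -> R) (lam a rho : R) (i : nat) : R -> R :=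
  if Nat.eqb i 1 then
    fun u => (lam - a ^ 2 * rho) / (2 * a_plus lam a) * M1 u
             - (a_minus lam a) ^ 2 / (4 * lam) * rho * u
  else
    fun u => - ((lam - a ^ 2 * rho) / (2 * a_minus lam a)) * M2 u
             + (a_plus lam a) ^ 2 / (4 * lam) * rho * u.

From Stdlib Require Import Reals ZArith Lra Psatz.
Open Scope R_scope.

(* Write r = dt/dx, so that (dt/dx)/2 dx = dt/2.  In a fixed row i, differentiating the
   identities defining B^i_{-1}, B^i_0, B^i_1 and using the choice of (B^i_0)' shows that
   (B^i_{-1})', (B^i_1)' = (|Gamma_i'| -+ Gamma_i')/2, (B^i_0)' = M_i'(1 - dt/2) - |Gamma_i'|,
   and likewise beta^i_{-1}, beta^i_1 = (|gamma_i| -+ gamma_i)/2.  [row_monotone] derives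
   the six inequalities for any such row from
     (a) |Gamma_i'| <= M_i' (1 - dt/2),  (b) dt (1 + |gamma_i|) <= 1 - lam r,
     (c) dx (|gamma_i| -+ gamma_i) <= lam +- lambda_i.
   The remaining lemmas check (a)-(c) for both rows under the CFL conditions, using
   gamma_1 >= 0 >= gamma_2, Gamma_i' = -+ (c_i M_i' - k_i) with k_i <= c_i m_i (the bounds
   on rho), and, for row 2, the "wave condition" 2a - lam <= r (a^2 - dx a_-) to which
   both alternatives of the hypothesis on lam/a reduce. *)

Lemma mul_le_of_le_div (x n d : R) : 0 < d -> x <= n / d -> x * d <= n.
Proof.
  intros Hd H. apply Rmult_le_compat_r with (r := d) in H; [|lra].
  replace (n / d * d) with n in H by (field; lra). exact H.
Qed.

Lemma le_Rmin_split (r x y : R) : r <= Rmin x y -> r <= x /\ r <= y.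
Proof. intro H. split; eapply Rle_trans; [exact H | apply Rmin_l | exact H | apply Rmin_r]. Qed.

Lemma upwind_split (x y G : R) : y - x = G -> x + y = Rabs G -> 0 <= x /\ 0 <= y.
Proof.
  intros Hd Hs. pose proof (Rle_abs G). pose proof (Rle_abs (- G)).
  rewrite Rabs_Ropp in *. lra.
Qed.

Lemma slopes_sum_one (M1 M2 dM1 dM2 : R -> R) (u : R) :
  (forall v, derivable_pt_lim M1 v (dM1 v)) ->
  (forall v, derivable_pt_lim M2 v (dM2 v)) ->
  (forall v, M1 v + M2 v = v) ->
  dM1 u + dM2 u = 1.
Proof.
  intros HM1 HM2 Hsum.
  apply (uniqueness_limite id u); [|apply derivable_pt_lim_id].
  apply (derivable_pt_lim_ext (M1 + M2)%F); [exact Hsum|].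
  apply derivable_pt_lim_plus; auto.
Qed.

(* F' = lam (M_2' - M_1') = lam (2 M_2' - 1), so |F'| <= lam gives M_2' <= 1;
   row 2 needs this upper bound on its Maxwellian slope. *)
Lemma slope2_le_one (lam : R) (M1 M2 dM1 dM2 : R -> R) (u : R) :
  (forall v, derivable_pt_lim M1 v (dM1 v)) ->
  (forall v, derivable_pt_lim M2 v (dM2 v)) ->
  (forall v, M1 v + M2 v = v) ->
  (forall v l, derivable_pt_lim (Fflux lam M1 M2) v l -> Rabs l <= lam) ->
  0 < lam -> dM2 u <= 1.
Proof.
  intros HM1 HM2 Hsum HFinf Hlam.
  pose proof (HFinf u _ (derivable_pt_lim_scal _ lam u _
    (derivable_pt_lim_minus _ _ u _ _ (HM2 u) (HM1 u)))) as HF.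
  pose proof (slopes_sum_one M1 M2 dM1 dM2 u HM1 HM2 Hsum).
  pose proof (Rle_abs (lam * (dM2 u - dM1 u))).
  nra.
Qed.

(* The coefficients in Gamma_1(u) = c_1 M_1(u) - k_1 u and
   Gamma_2(u) = - c_2 M_2(u) + k_2 u. *)
Definition Gamma_coef1 (lam a r : R) : R := (lam - a ^ 2 * r) / (2 * a_plus lam a).
Definition Gamma_drift1 (lam a r : R) : R := a_minus lam a ^ 2 / (4 * lam) * r.
Definition Gamma_coef2 (lam a r : R) : R := (lam - a ^ 2 * r) / (2 * a_minus lam a).
Definition Gamma_drift2 (lam a r : R) : R := a_plus lam a ^ 2 / (4 * lam) * r.

Lemma Gamma1_slope (M1 M2 dM1 : R -> R) (lam a r u dG : R) :
  (forall v, derivable_pt_lim M1 v (dM1 v)) ->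
  derivable_pt_lim (Gamma_i M1 M2 lam a r 1) u dG ->
  dG = Gamma_coef1 lam a r * dM1 u - Gamma_drift1 lam a r.
Proof.
  intros HM1 HG. apply (uniqueness_limite _ u _ _ HG).
  rewrite <- (Rmult_1_r (Gamma_drift1 lam a r)).
  apply (derivable_pt_lim_minus (mult_real_fct _ M1) (mult_real_fct _ id));
    apply derivable_pt_lim_scal; [apply HM1 | apply derivable_pt_lim_id].
Qed.

Lemma Gamma2_slope (M1 M2 dM2 : R -> R) (lam a r u dG : R) :
  (forall v, derivable_pt_lim M2 v (dM2 v)) ->
  derivable_pt_lim (Gamma_i M1 M2 lam a r 2) u dG ->
  dG = - Gamma_coef2 lam a r * dM2 u + Gamma_drift2 lam a r.
Proof.
  intros HM2 HG. apply (uniqueness_limite _ u _ _ HG).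
  rewrite <- (Rmult_1_r (Gamma_drift2 lam a r)).
  apply (derivable_pt_lim_plus (mult_real_fct _ M2) (mult_real_fct _ id));
    apply derivable_pt_lim_scal; [apply HM2 | apply derivable_pt_lim_id].
Qed.

Lemma stencil_derivatives (B dB : Z -> R -> R) (G M : R -> R) (c dG dM u : R) :
  (forall l, (l = (-1)%Z \/ l = 0%Z \/ l = 1%Z) -> derivable_pt_lim (B l) u (dB l u)) ->
  derivable_pt_lim G u dG -> derivable_pt_lim M u dM ->
  (forall v, B 1%Z v - B (-1)%Z v = G v) ->
  (forall v, B (-1)%Z v + B 0%Z v + B 1%Z v = M v * c) ->
  dB 1%Z u - dB (-1)%Z u = dG /\ dB (-1)%Z u + dB 0%Z u + dB 1%Z u = dM * c.
Proof.
  intros HB HG HM Hdiff Hsum.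
  assert (Hm : derivable_pt_lim (B (-1)%Z) u (dB (-1)%Z u)) by auto.
  assert (H0 : derivable_pt_lim (B 0%Z) u (dB 0%Z u)) by auto.
  assert (H1 : derivable_pt_lim (B 1%Z) u (dB 1%Z u)) by auto.
  split.
  - apply (uniqueness_limite G u); [|exact HG].
    apply (derivable_pt_lim_ext (B 1%Z - B (-1)%Z)%F); [exact Hdiff|].
    apply derivable_pt_lim_minus; assumption.
  - rewrite Rmult_comm.
    apply (uniqueness_limite (mult_real_fct c M) u); [|apply derivable_pt_lim_scal, HM].
    apply (derivable_pt_lim_ext (B (-1)%Z + B 0%Z + B 1%Z)%F).
    + intro v. unfold mult_real_fct, plus_fct. rewrite Hsum. ring.
    + repeat apply derivable_pt_lim_plus; assumption.
Qed.

Lemma stencil_monotone (dBm dB0 dB1 bm b0 b1 dM dG g lam li r dx : R) :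
  0 <= r -> 0 < dx ->
  dB1 - dBm = dG -> dBm + dB0 + dB1 = dM * (1 - r * dx / 2) ->
  dB0 = dM * (1 - r * dx / 2) - Rabs dG ->
  b1 - bm = g -> bm + b0 + b1 = 1 - r * dx / 2 -> b0 = 1 - Rabs g - r * dx / 2 ->
  Rabs dG <= dM * (1 - r * dx / 2) ->
  r * dx * (1 + Rabs g) <= 1 - lam * r ->
  dx * (Rabs g - g) <= lam + li ->
  dx * (Rabs g + g) <= lam - li ->
  (0 <= dBm /\ 0 <= dB0 /\ 0 <= dB1) /\
  0 <= 1 - r * lam + r * dx * (dB0 - b0) /\
  0 <= r * (li + lam) / 2 + r * dx * (dBm - bm) /\
  0 <= r * (lam - li) / 2 + r * dx * (dB1 - b1).
Proof.
  intros Hr Hdx HdB1 HdBs HdB0 Hb1 Hbs Hb0 Hbudget Hcfl Hleft Hright.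
  destruct (upwind_split dBm dB1 dG) as [HdBm_pos HdB1_pos]; [lra | lra |].
  assert (Hbm : bm = (Rabs g - g) / 2) by lra.
  assert (Hb1' : b1 = (Rabs g + g) / 2) by lra.
  assert (HdB0_pos : 0 <= dB0) by lra.
  assert (Hdt : 0 <= r * dx) by (apply Rmult_le_pos; lra).
  pose proof (Rabs_pos g).
  pose proof (Rmult_le_pos _ _ Hdt HdB0_pos).
  pose proof (Rmult_le_pos _ _ Hdt HdBm_pos).
  pose proof (Rmult_le_pos _ _ Hdt HdB1_pos).
  pose proof (Rmult_le_pos _ _ Hdt (Rabs_pos g)).
  pose proof (Rmult_le_pos _ _ Hdt Hdt).
  assert (r * (dx * (Rabs g - g)) <= r * (lam + li)) by (apply Rmult_le_compat_l; lra).
  assert (r * (dx * (Rabs g + g)) <= r * (lam - li)) by (apply Rmult_le_compat_l; lra).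
  rewrite Hb0, Hbm, Hb1'.
  repeat split; nra.
Qed.

Lemma row_monotone (B dB : Z -> R -> R) (beta : Z -> R) (M G : R -> R)
    (dM dG g lam li dt dx u : R) :
  0 <= dt -> 0 < dx ->
  (forall l, (l = (-1)%Z \/ l = 0%Z \/ l = 1%Z) -> derivable_pt_lim (B l) u (dB l u)) ->
  derivable_pt_lim M u dM -> derivable_pt_lim G u dG ->
  (forall v, B 1%Z v - B (-1)%Z v = G v) ->
  (forall v, B (-1)%Z v + B 0%Z v + B 1%Z v = M v * (1 - (dt / dx) / 2 * dx)) ->
  dB 0%Z u = dM - Rabs dG - (dt / dx) / 2 * dx * dM ->
  beta (-1)%Z + beta 0%Z + beta 1%Z = 1 - (dt / dx) / 2 * dx ->
  beta 1%Z - beta (-1)%Z = g ->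
  beta 0%Z = 1 - Rabs g - (dt / dx) / 2 * dx ->
  Rabs dG <= dM * (1 - dt / 2) ->
  dt * (1 + Rabs g) <= 1 - lam * (dt / dx) ->
  dx * (Rabs g - g) <= lam + li ->
  dx * (Rabs g + g) <= lam - li ->
  (forall l, (l = (-1)%Z \/ l = 0%Z \/ l = 1%Z) -> 0 <= dB l u) /\
  0 <= 1 - (dt / dx) * lam + dt * (dB 0%Z u - beta 0%Z) /\
  0 <= (dt / dx) * (li + lam) / 2 + dt * (dB (-1)%Z u - beta (-1)%Z) /\
  0 <= (dt / dx) * (lam - li) / 2 + dt * (dB 1%Z u - beta 1%Z).
Proof.
  intros Hdt Hdx HB HM HG Hdiff Hsum HdB0 Hbs Hbd Hb0 Hbudget Hcfl Hleft Hright.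
  set (r := dt / dx) in *.
  assert (Hr : 0 <= r) by (unfold r; apply Rmult_le_pos; [lra | left; apply Rinv_0_lt_compat; lra]).
  assert (Hdtr : dt = r * dx) by (unfold r; field; lra).
  assert (Hh : r / 2 * dx = r * dx / 2) by field.
  rewrite Hh in *. rewrite Hdtr in *.
  destruct (stencil_derivatives B dB G M _ dG dM u HB HG HM Hdiff Hsum) as [D1 Ds].
  destruct (stencil_monotone (dB (-1)%Z u) (dB 0%Z u) (dB 1%Z u)
              (beta (-1)%Z) (beta 0%Z) (beta 1%Z) dM dG g lam li r dx)
    as [(Pm & P0 & P1) Prest]; try assumption; try lra.
  split; [intros l [-> | [-> | ->]]; assumption | exact Prest].
Qed.

(* Both alternatives of the hypothesis on lam/a give a < lam and the wave condition
   2a - lam <= r (a^2 - dx a_-); for lam > 2a it holds since a^2 > dx a_- by the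
   mesh condition. *)
Lemma wave_condition (lam a dx r : R) :
  0 < a -> 0 < dx -> 0 <= r -> dx * (lam + a) <= a ^ 2 ->
  (2 * a < lam \/
   (a < lam < 2 * a /\ Rabs (lam - 2 * a) / (a ^ 2 - dx * a_minus lam a) <= r)) ->
  a < lam /\ 2 * a - lam <= r * (a ^ 2 - dx * (lam - a)).
Proof.
  unfold a_minus. intros Ha Hdx Hr Hmesh Hcase.
  assert (Hal : a < lam) by (destruct Hcase as [| [[] _]]; lra).
  assert (HD : 0 < a ^ 2 - dx * (lam - a)).
  { assert (dx * (lam - a) < dx * (lam + a)) by (apply Rmult_lt_compat_l; lra). lra. }
  split; [exact Hal|].
  destruct Hcase as [Hfar | [[_ Hnear] Hrho]].
  - assert (0 <= r * (a ^ 2 - dx * (lam - a))) by (apply Rmult_le_pos; lra). lra.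
  - rewrite Rabs_left in Hrho by lra.
    apply (Rmult_le_compat_r (a ^ 2 - dx * (lam - a))) in Hrho; [|lra].
    unfold Rdiv in Hrho. rewrite Rmult_assoc, Rinv_l, Rmult_1_r in Hrho by lra. lra.
Qed.

Lemma rho_bounds (lam a m1 m2 r : R) :
  0 < a < lam -> 0 < m1 -> 0 < m2 ->
  r <= Rmin (1 / lam)
         (Rmin (2 * lam ^ 2 * m1 / (2 * a ^ 2 * lam * m1 + (lam + a) * (lam - a) ^ 2))
               (2 * lam ^ 2 * m2 / (2 * a ^ 2 * lam * m2 + (lam + a) ^ 2 * (lam - a)))) ->
  r * lam <= 1 /\
  r * (2 * a ^ 2 * lam * m1 + (lam + a) * (lam - a) ^ 2) <= 2 * lam ^ 2 * m1 /\
  r * (2 * a ^ 2 * lam * m2 + (lam + a) ^ 2 * (lam - a)) <= 2 * lam ^ 2 * m2.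
Proof.
  intros Ha Hm1 Hm2 Hr.
  destruct (le_Rmin_split _ _ _ Hr) as [Hr0 Hr12].
  destruct (le_Rmin_split _ _ _ Hr12) as [Hr1 Hr2].
  assert (0 < a ^ 2 * lam) by (apply Rmult_lt_0_compat; [apply pow_lt|]; lra).
  assert (0 < (lam + a) * (lam - a) ^ 2) by (apply Rmult_lt_0_compat; [|apply pow_lt]; lra).
  assert (0 < (lam + a) ^ 2 * (lam - a)) by (apply Rmult_lt_0_compat; [apply pow_lt|]; lra).
  repeat split; apply mul_le_of_le_div; [lra | nra | nra | assumption | nra | assumption].
Qed.

Lemma timestep_bound (dt n g1 g2 : R) :
  0 <= g1 -> g2 <= 0 -> dt <= Rmin (n / (1 + g1)) (n / (1 - g2)) ->
  dt * (1 + Rabs g1) <= n /\ dt * (1 + Rabs g2) <= n.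
Proof.
  intros Hg1 Hg2 Hdt. rewrite (Rabs_pos_eq g1 Hg1), (Rabs_left1 g2 Hg2).
  destruct (le_Rmin_split _ _ _ Hdt) as [H1 H2].
  replace (1 + - g2) with (1 - g2) by ring.
  split; apply mul_le_of_le_div; lra.
Qed.

Lemma gamma1_scaled (lam a r : R) : 0 < lam + a ->
  gamma_i lam a r 1 * (2 * (lam + a)) = lam + a * r * (2 * lam + a).
Proof. intro H. unfold gamma_i, a_plus; cbn [Nat.eqb]. field. lra. Qed.

Lemma gamma2_scaled (lam a r : R) : 0 < lam - a ->
  gamma_i lam a r 2 * (2 * (lam - a)) = - lam + a * r * (2 * lam - a).
Proof. intro H. unfold gamma_i, a_minus; cbn [Nat.eqb]. field. lra. Qed.

Lemma Gamma_coefs_scaled (lam a r : R) : 0 < a < lam ->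
  Gamma_coef1 lam a r * (2 * (lam + a)) = lam - a ^ 2 * r /\
  Gamma_drift1 lam a r * (4 * lam) = (lam - a) ^ 2 * r /\
  Gamma_coef2 lam a r * (2 * (lam - a)) = lam - a ^ 2 * r /\
  Gamma_drift2 lam a r * (4 * lam) = (lam + a) ^ 2 * r.
Proof.
  intro H. unfold Gamma_coef1, Gamma_drift1, Gamma_coef2, Gamma_drift2, a_plus, a_minus.
  repeat split; field; lra.
Qed.

(* a^2 r <= lam, i.e. c_1, c_2 >= 0, as soon as r lam <= 1. *)
Lemma a2r_le_lam (lam a r : R) : 0 < a < lam -> 0 <= r -> r * lam <= 1 -> a ^ 2 * r <= lam.
Proof.
  intros Ha Hr Hrl.
  assert (a ^ 2 * (r * lam) <= a ^ 2 * 1) by (apply Rmult_le_compat_l; nra).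
  assert (a ^ 2 <= lam * lam) by nra.
  apply Rmult_le_reg_r with lam; lra.
Qed.

Lemma gamma1_nonneg (lam a r : R) : 0 < a < lam -> 0 <= r -> 0 <= gamma_i lam a r 1.
Proof.
  intros Ha Hr. pose proof (gamma1_scaled lam a r ltac:(lra)).
  assert (0 <= a * r) by (apply Rmult_le_pos; lra). nra.
Qed.

(* gamma_2 <= 0 (so |gamma_2| = - gamma_2) because a (2 lam - a) r <= lam^2 r <= lam. *)
Lemma gamma2_nonpos (lam a r : R) :
  0 < a < lam -> 0 <= r -> r * lam <= 1 -> gamma_i lam a r 2 <= 0.
Proof.
  intros Ha Hr Hrl. pose proof (gamma2_scaled lam a r ltac:(lra)).
  assert (Hw : 0 <= a * (2 * lam - a)) by (apply Rmult_le_pos; lra).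
  assert (a * (2 * lam - a) * (r * lam) <= a * (2 * lam - a) * 1)
    by (apply Rmult_le_compat_l; lra).
  assert (a * r * (2 * lam - a) <= lam) by nra.
  nra.
Qed.

Lemma gamma1_mesh (lam a r dx : R) :
  0 < a < lam -> 0 < dx -> 0 <= r -> r * lam <= 1 -> dx * (lam + a) <= a ^ 2 ->
  dx * gamma_i lam a r 1 <= lam.
Proof.
  intros Ha Hdx Hr Hrl Hmesh. pose proof (gamma1_scaled lam a r ltac:(lra)) as Hg.
  assert (Hw : 0 <= a * (2 * lam + a)) by (apply Rmult_le_pos; lra).
  assert (Hdrift : a * r * (2 * lam + a) * lam <= a * (2 * lam + a))
    by (replace (a * r * (2 * lam + a) * lam) with (a * (2 * lam + a) * (r * lam)) by ring;
        rewrite <- (Rmult_1_r (a * (2 * lam + a))) at 2; apply Rmult_le_compat_l; lra).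
  assert (Hsq : dx * (lam + a) * (lam + a) <= a ^ 2 * (lam + a))
    by (apply Rmult_le_compat_r; lra).
  assert (Hscaled : lam * (dx * (lam + a * r * (2 * lam + a))) <= lam * (2 * lam * (lam + a)))
    by nra.
  assert (dx * (lam + a * r * (2 * lam + a)) <= 2 * lam * (lam + a))
    by (apply Rmult_le_reg_l with lam; lra).
  nra.
Qed.

(* Velocity bound (c) for row 2: lam + dx gamma_2 >= 0.  If dx <= 2 a_- this is
   immediate; otherwise lam < 2a and the wave condition bounds r from below. *)
Lemma gamma2_mesh (lam a r dx : R) :
  0 < a < lam -> 0 < dx -> 0 <= r -> dx * (lam + a) <= a ^ 2 ->
  2 * a - lam <= r * (a ^ 2 - dx * (lam - a)) ->
  0 <= lam + dx * gamma_i lam a r 2.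
Proof.
  intros Ha Hdx Hr Hmesh Hwave. pose proof (gamma2_scaled lam a r ltac:(lra)) as Hg.
  set (T := 2 * lam * (lam - a) - dx * lam + dx * a * (2 * lam - a) * r).
  assert (HT : 2 * (lam - a) * (lam + dx * gamma_i lam a r 2) = T)
    by (unfold T; replace (2 * (lam - a) * (lam + dx * gamma_i lam a r 2))
          with (2 * lam * (lam - a) + dx * (gamma_i lam a r 2 * (2 * (lam - a)))) by ring;
        rewrite Hg; ring).
  assert (Hw : 0 <= dx * a * (2 * lam - a)) by (repeat apply Rmult_le_pos; lra).
  assert (0 <= T); [|nra].
  destruct (Rle_lt_dec dx (2 * (lam - a))) as [Hsmall | Hlarge].
  - assert (0 <= lam * (2 * (lam - a) - dx)) by (apply Rmult_le_pos; lra).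
    assert (0 <= dx * a * (2 * lam - a) * r) by (apply Rmult_le_pos; lra).
    unfold T. lra.
  - assert (Hdxa : dx < a) by nra.
    set (D := a ^ 2 - dx * (lam - a)) in *.
    assert (HrD : 0 < r * D) by lra.
    assert (HD : 0 < D) by (destruct (Rle_lt_dec D 0); [nra | lra]).
    assert (HDa : D <= a ^ 2) by (unfold D; nra).
    assert (HTD : T * D >= (2 * lam * (lam - a) - dx * lam) * D
                           + dx * a * (2 * lam - a) * (2 * a - lam))
      by (unfold T; nra).
    assert ((2 * lam * (lam - a) - dx * lam) * a ^ 2 <= (2 * lam * (lam - a) - dx * lam) * D)
      by (apply Rmult_le_compat_neg_l; [nra | exact HDa]).
    assert (Hid : (2 * lam * (lam - a) - dx * lam) * a ^ 2
                  + dx * a * (2 * lam - a) * (2 * a - lam)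
                  = 2 * a * (lam - a) * (lam * a - dx * (lam - a))) by ring.
    assert (0 <= 2 * a * (lam - a) * (lam * a - dx * (lam - a)))
      by (repeat apply Rmult_le_pos; nra).
    assert (0 <= T * D) by lra.
    nra.
Qed.

(* Budget (a) for row 1: |c_1 d - k_1| <= d (1 - dt/2) for every slope d >= m_1;
   the bound on rho involving m_1 says exactly k_1 <= c_1 m_1, and c_1 <= 1/2. *)
Lemma Gamma1_slope_bound (lam a r dt m1 d : R) :
  0 < a < lam -> 0 <= r -> r * lam <= 1 -> 0 <= dt <= 1 ->
  r * (2 * a ^ 2 * lam * m1 + (lam + a) * (lam - a) ^ 2) <= 2 * lam ^ 2 * m1 ->
  0 < m1 <= d ->
  Rabs (Gamma_coef1 lam a r * d - Gamma_drift1 lam a r) <= d * (1 - dt / 2).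
Proof.
  intros Ha Hr Hrl Hdt Hrm Hd.
  destruct (Gamma_coefs_scaled lam a r Ha) as (Hc & Hk & _).
  pose proof (a2r_le_lam lam a r Ha Hr Hrl).
  set (c := Gamma_coef1 lam a r) in *. set (k := Gamma_drift1 lam a r) in *.
  assert (Hc0 : 0 <= c) by nra.
  assert (Hc1 : c <= 1 / 2) by nra.
  assert (Hk0 : 0 <= k).
  { assert (0 <= (lam - a) ^ 2 * r) by (apply Rmult_le_pos; [apply pow2_ge_0 | lra]). nra. }
  assert (Hmk : k <= c * m1).
  { assert (4 * lam * (lam + a) * (c * m1 - k)
            = 2 * lam ^ 2 * m1 - r * (2 * a ^ 2 * lam * m1 + (lam + a) * (lam - a) ^ 2)).
    { transitivity (2 * lam * m1 * (c * (2 * (lam + a))) - (lam + a) * (k * (4 * lam))); [ring|].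
      rewrite Hc, Hk. ring. }
    assert (0 < 4 * lam * (lam + a)) by nra.
    nra. }
  apply Rabs_le. split; nra.
Qed.

(* Budget (a) for row 2: |- c_2 d + k_2| <= d (1 - dt/2) for m_2 <= d <= 1; besides
   k_2 <= c_2 m_2, the wave condition is what gives c_2 - k_2 <= 1 - dt/2. *)
Lemma Gamma2_slope_bound (lam a r dx dt m2 d : R) :
  0 < a < lam -> 0 <= r -> r * lam <= 1 -> dt = r * dx -> 0 <= dt <= 1 ->
  2 * a - lam <= r * (a ^ 2 - dx * (lam - a)) ->
  r * (2 * a ^ 2 * lam * m2 + (lam + a) ^ 2 * (lam - a)) <= 2 * lam ^ 2 * m2 ->
  0 < m2 <= d -> d <= 1 ->
  Rabs (- Gamma_coef2 lam a r * d + Gamma_drift2 lam a r) <= d * (1 - dt / 2).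
Proof.
  intros Ha Hr Hrl Hdtr Hdt Hwave Hrm Hd Hd1.
  destruct (Gamma_coefs_scaled lam a r Ha) as (_ & _ & Hc & Hk).
  pose proof (a2r_le_lam lam a r Ha Hr Hrl).
  set (c := Gamma_coef2 lam a r) in *. set (k := Gamma_drift2 lam a r) in *.
  assert (Hpos : 0 < 4 * lam * (lam - a)) by nra.
  assert (Hc0 : 0 <= c) by nra.
  assert (Hk0 : 0 <= k).
  { assert (0 <= (lam + a) ^ 2 * r) by (apply Rmult_le_pos; [apply pow2_ge_0 | lra]). nra. }
  assert (Hmk : k <= c * m2).
  { assert (4 * lam * (lam - a) * (c * m2 - k)
            = 2 * lam ^ 2 * m2 - r * (2 * a ^ 2 * lam * m2 + (lam + a) ^ 2 * (lam - a))).
    { transitivity (2 * lam * m2 * (c * (2 * (lam - a))) - (lam - a) * (k * (4 * lam))); [ring|].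
      rewrite Hc, Hk. ring. }
    nra. }
  assert (Hbudget : c - k <= 1 - dt / 2).
  { assert (4 * lam * (lam - a) * (1 - dt / 2 - c + k)
            = 2 * lam * (lam - 2 * a + r * (a ^ 2 - dx * (lam - a)))
              + r * ((lam + a) ^ 2 * (lam - a))).
    { transitivity (4 * lam * (lam - a) - 2 * lam * (lam - a) * dt
                    - 2 * lam * (c * (2 * (lam - a))) + (lam - a) * (k * (4 * lam))); [field|].
      rewrite Hc, Hk, Hdtr. ring. }
    assert (0 <= r * ((lam + a) ^ 2 * (lam - a)))
      by (apply Rmult_le_pos; [lra | apply Rmult_le_pos; [apply pow2_ge_0 | lra]]).
    nra. }
  apply Rabs_le. split; nra.
Qed.

Lemma row1_conditions (lam a r dx dt m1 d dG b0 : R) :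
  0 < a < lam -> 0 < dx -> 0 <= r -> r * lam <= 1 -> 0 <= dt <= 1 ->
  dx * (lam + a) <= a ^ 2 ->
  r * (2 * a ^ 2 * lam * m1 + (lam + a) * (lam - a) ^ 2) <= 2 * lam ^ 2 * m1 ->
  0 < m1 <= d ->
  dG = Gamma_coef1 lam a r * d - Gamma_drift1 lam a r ->
  b0 = 1 - gamma_i lam a r 1 - r / 2 * dx ->
  b0 = 1 - Rabs (gamma_i lam a r 1) - r / 2 * dx /\
  Rabs dG <= d * (1 - dt / 2) /\
  dx * (Rabs (gamma_i lam a r 1) - gamma_i lam a r 1) <= lam + - lam /\
  dx * (Rabs (gamma_i lam a r 1) + gamma_i lam a r 1) <= lam - - lam.
Proof.
  intros Ha Hdx Hr Hrl Hdt Hmesh Hrm Hd HdG Hb0.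
  rewrite (Rabs_pos_eq _ (gamma1_nonneg lam a r Ha Hr)), HdG.
  pose proof (gamma1_mesh lam a r dx Ha Hdx Hr Hrl Hmesh).
  repeat split; try lra.
  exact (Gamma1_slope_bound lam a r dt m1 d Ha Hr Hrl Hdt Hrm Hd).
Qed.

Lemma row2_conditions (lam a r dx dt m2 d dG b0 : R) :
  0 < a < lam -> 0 < dx -> 0 <= r -> r * lam <= 1 -> dt = r * dx -> 0 <= dt <= 1 ->
  dx * (lam + a) <= a ^ 2 -> 2 * a - lam <= r * (a ^ 2 - dx * (lam - a)) ->
  r * (2 * a ^ 2 * lam * m2 + (lam + a) ^ 2 * (lam - a)) <= 2 * lam ^ 2 * m2 ->
  0 < m2 <= d -> d <= 1 ->
  dG = - Gamma_coef2 lam a r * d + Gamma_drift2 lam a r ->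
  b0 = 1 + gamma_i lam a r 2 - r / 2 * dx ->
  b0 = 1 - Rabs (gamma_i lam a r 2) - r / 2 * dx /\
  Rabs dG <= d * (1 - dt / 2) /\
  dx * (Rabs (gamma_i lam a r 2) - gamma_i lam a r 2) <= lam + lam /\
  dx * (Rabs (gamma_i lam a r 2) + gamma_i lam a r 2) <= lam - lam.
Proof.
  intros Ha Hdx Hr Hrl Hdtr Hdt Hmesh Hwave Hrm Hd Hd1 HdG Hb0.
  rewrite (Rabs_left1 _ (gamma2_nonpos lam a r Ha Hr Hrl)), HdG.
  pose proof (gamma2_mesh lam a r dx Ha Hdx Hr Hmesh Hwave).
  repeat split; try lra.
  exact (Gamma2_slope_bound lam a r dx dt m2 d Ha Hr Hrl Hdtr Hdt Hwave Hrm Hd Hd1).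
Qed.

Theorem proposition4p1
  (lam dt dx : R) (M1 M2 dM1 dM2 : R -> R) (a : R)
  (U : R -> Prop) (m1 m2 : R)
  (B : nat -> Z -> R -> R) (dB : nat -> Z -> R -> R) (beta : nat -> Z -> R)
  (dGamma : nat -> R -> R)
  (* parameters *)
  (Hlam : 0 < lam) (Hdt : 0 < dt) (Hdx : 0 < dx)
  (* the Maxwellians: smooth (here: differentiable), M1 + M2 = id, F(0) = 0 *)
  (HdM1 : forall u, derivable_pt_lim M1 u (dM1 u))
  (HdM2 : forall u, derivable_pt_lim M2 u (dM2 u))
  (Hsum : forall u, M1 u + M2 u = u)
  (HF0 : Fflux lam M1 M2 0 = 0)
  (* a = F'(0) > 0 *)
  (Ha : derivable_pt_lim (Fflux lam M1 M2) 0 a) (Hapos : 0 < a)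
  (* lambda >= || F' ||_infty *)
  (HFinf : forall u l, derivable_pt_lim (Fflux lam M1 M2) u l -> Rabs l <= lam)
  (* m_i = min_{u in U} M_i'(u) > 0 *)
  (Hm1min : (exists u, U u /\ dM1 u = m1) /\ (forall u, U u -> m1 <= dM1 u))
  (Hm2min : (exists u, U u /\ dM2 u = m2) /\ (forall u, U u -> m2 <= dM2 u))
  (Hm1 : 0 < m1) (Hm2 : 0 < m2)
  (* the TAHO coefficients, i in {1,2}, l in {-1,0,1} *)
  (HB : forall i l u, (i = 1%nat \/ i = 2%nat) -> (l = (-1)%Z \/ l = 0%Z \/ l = 1%Z) ->
          derivable_pt_lim (B i l) u (dB i l u))
  (HdGamma : forall i u, (i = 1%nat \/ i = 2%nat) ->
          derivable_pt_lim (Gamma_i M1 M2 lam a (dt / dx) i) u (dGamma i u))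
  (Hbeta_sum : forall i, (i = 1%nat \/ i = 2%nat) ->
          beta i (-1)%Z + beta i 0%Z + beta i 1%Z = 1 - (dt / dx) / 2 * dx)
  (HB_sum : forall i u, (i = 1%nat \/ i = 2%nat) ->
          B i (-1)%Z u + B i 0%Z u + B i 1%Z u = Mi M1 M2 i u * (1 - (dt / dx) / 2 * dx))
  (Hbeta_diff : forall i, (i = 1%nat \/ i = 2%nat) ->
          beta i 1%Z - beta i (-1)%Z = gamma_i lam a (dt / dx) i)
  (HB_diff : forall i u, (i = 1%nat \/ i = 2%nat) ->
          B i 1%Z u - B i (-1)%Z u = Gamma_i M1 M2 lam a (dt / dx) i u)
  (Hbeta10 : beta 1%nat 0%Z = 1 - gamma_i lam a (dt / dx) 1 - (dt / dx) / 2 * dx)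
  (Hbeta20 : beta 2%nat 0%Z = 1 + gamma_i lam a (dt / dx) 2 - (dt / dx) / 2 * dx)
  (HB0 : forall i u, (i = 1%nat \/ i = 2%nat) ->
          dB i 0%Z u = (if Nat.eqb i 1 then dM1 u else dM2 u)
                       - Rabs (dGamma i u)
                       - (dt / dx) / 2 * dx * (if Nat.eqb i 1 then dM1 u else dM2 u))
  (* CFL-type conditions *)
  (Hdtc : dt <= Rmin ((1 - lam * (dt / dx)) / (1 + gamma_i lam a (dt / dx) 1))
                     ((1 - lam * (dt / dx)) / (1 - gamma_i lam a (dt / dx) 2)))
  (Hdxc : dx <= a ^ 2 / (lam + a))
  (Hrhoc : dt / dx <= Rmin (1 / lam)
             (Rmin (2 * lam ^ 2 * m1 /
                      (2 * a ^ 2 * lam * m1 + a_plus lam a * (a_minus lam a) ^ 2))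
                   (2 * lam ^ 2 * m2 /
                      (2 * a ^ 2 * lam * m2 + (a_plus lam a) ^ 2 * a_minus lam a))))
  (Hcase : 2 * a < lam \/
           (a < lam < 2 * a /\
            Rabs (lam - 2 * a) / (a ^ 2 - dx * a_minus lam a) <= dt / dx)) :
  forall i u, (i = 1%nat \/ i = 2%nat) -> U u ->
    (forall l, (l = (-1)%Z \/ l = 0%Z \/ l = 1%Z) -> 0 <= dB i l u) /\
    0 <= 1 - (dt / dx) * lam + dt * (dB i 0%Z u - beta i 0%Z) /\
    0 <= (dt / dx) * (lambda_i lam i + lam) / 2 + dt * (dB i (-1)%Z u - beta i (-1)%Z) /\
    0 <= (dt / dx) * (lam - lambda_i lam i) / 2 + dt * (dB i 1%Z u - beta i 1%Z).
Proof.
  intros i u Hi HU.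
  set (r := dt / dx) in *.
  assert (Hr : 0 <= r) by (left; apply Rdiv_lt_0_compat; lra).
  assert (Hdtr : dt = r * dx) by (unfold r; field; lra).
  assert (Hmesh : dx * (lam + a) <= a ^ 2) by (apply mul_le_of_le_div; lra).
  destruct (wave_condition lam a dx r Hapos Hdx Hr Hmesh Hcase) as [Hal Hwave].
  assert (Hspeed : 0 < a < lam) by lra.
  unfold a_plus, a_minus in Hrhoc.
  destruct (rho_bounds lam a m1 m2 r Hspeed Hm1 Hm2 Hrhoc) as (Hrl & Hrm1 & Hrm2).
  destruct (timestep_bound dt _ _ _ (gamma1_nonneg lam a r Hspeed Hr)
              (gamma2_nonpos lam a r Hspeed Hr Hrl) Hdtc) as [Hdt1 Hdt2].
  (* the time-step condition forces dt <= 1 *)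
  assert (Hdt_le1 : 0 <= dt <= 1).
  { pose proof (Rabs_pos (gamma_i lam a r 1)). assert (0 <= lam * r) by nra. split; nra. }
  destruct Hi as [-> | ->]; [pose proof (or_introl eq_refl : (1 = 1 \/ 1 = 2)%nat) as I
                            | pose proof (or_intror eq_refl : (2 = 1 \/ 2 = 2)%nat) as I].
  - destruct (row1_conditions lam a r dx dt m1 (dM1 u) (dGamma 1%nat u) (beta 1%nat 0%Z)
                Hspeed Hdx Hr Hrl Hdt_le1 Hmesh Hrm1 (conj Hm1 (proj2 Hm1min u HU))
                (Gamma1_slope M1 M2 dM1 lam a r u _ HdM1 (HdGamma 1%nat u I)) Hbeta10)
      as (Hb0 & Hbudget & Hleft & Hright).
    exact (row_monotone (B 1%nat) (dB 1%nat) (beta 1%nat) M1 _ (dM1 u) _ _ lam (- lam) dt dx u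
             (Rlt_le _ _ Hdt) Hdx (fun l Hl => HB 1%nat l u I Hl) (HdM1 u) (HdGamma 1%nat u I)
             (fun v => HB_diff 1%nat v I) (fun v => HB_sum 1%nat v I) (HB0 1%nat u I)
             (Hbeta_sum 1%nat I) (Hbeta_diff 1%nat I) Hb0 Hbudget Hdt1 Hleft Hright).
  - destruct (row2_conditions lam a r dx dt m2 (dM2 u) (dGamma 2%nat u) (beta 2%nat 0%Z)
                Hspeed Hdx Hr Hrl Hdtr Hdt_le1 Hmesh Hwave Hrm2 (conj Hm2 (proj2 Hm2min u HU))
                (slope2_le_one lam M1 M2 dM1 dM2 u HdM1 HdM2 Hsum HFinf Hlam)
                (Gamma2_slope M1 M2 dM2 lam a r u _ HdM2 (HdGamma 2%nat u I)) Hbeta20)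
      as (Hb0 & Hbudget & Hleft & Hright).
    exact (row_monotone (B 2%nat) (dB 2%nat) (beta 2%nat) M2 _ (dM2 u) _ _ lam lam dt dx u
             (Rlt_le _ _ Hdt) Hdx (fun l Hl => HB 2%nat l u I Hl) (HdM2 u) (HdGamma 2%nat u I)
             (fun v => HB_diff 2%nat v I) (fun v => HB_sum 2%nat v I) (HB0 2%nat u I)
             (Hbeta_sum 2%nat I) (Hbeta_diff 2%nat I) Hb0 Hbudget Hdt2 Hleft Hright).
Qed.
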